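(* Let $S$ be a monoid with a unique zero element in which every nonzero element is invertible, and let $A$ be a finitely generated right $S$-act. If $X$ and $Y$ are minimal generating sets for $A$, then $|X|=|Y|$.
   Context: A (right) $S$-act is a nonempty set $A$ with an action $(a,s)\mapsto as$, $a1=a$, $a(st)=(as)t$. A subset $X\subseteq A$ generates $A$ if $A=\bigcup_{x\in X}xS$; it is a minimal generating set if no proper subset of it generates $A$. $A$ is finitely generated if it has a finite generating set. A zero of the monoid $S$ is an element $z$ with $zs=sz=z$ for all $s\in S$. *)

From Stdlib Require Import List.

Record monoid := Monoid {
  mcar :> Type;
  mmul : mcar -> mcar -> mcar;
  mone : mcar;
  mmulA : forall a b c, mmul a (mmul b c) = mmul (mmul a b) c;
  mmul1l : forall a, mmul mone a = a;
  mmul1r : forall a, mmul a mone = a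
}.

Definition is_zero (S : monoid) (z : S) : Prop :=
  forall s : S, mmul S z s = z /\ mmul S s z = z.

Definition invertible (S : monoid) (s : S) : Prop :=
  exists t : S, mmul S s t = mone S /\ mmul S t s = mone S.

Record ract (S : monoid) := RAct {
  acar :> Type;
  act : acar -> S -> acar;
  acar_nonempty : inhabited acar;
  act1 : forall a, act a (mone S) = a;
  actA : forall a s t, act a (mmul S s t) = act (act a s) t
}.
Arguments act {S} _ _ _.

Definition generates (S : monoid) (A : ract S) (X : A -> Prop) : Prop :=
  forall a : A, exists x : A, exists s : S, X x /\ a = act A x s.

Definition minimal_generating (S : monoid) (A : ract S) (X : A -> Prop) : Prop :=
  generates S A X /\
  forall Y : A -> Prop,
    (forall y, Y y -> X y) -> (exists x, X x /\ ~ Y x) -> ~ generates S A Y.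

Definition finitely_generated (S : monoid) (A : ract S) : Prop :=
  exists l : list A, generates S A (fun x => In x l).

Definition same_card {T : Type} (X Y : T -> Prop) : Prop :=
  exists (f : {x | X x} -> {y | Y y}) (g : {y | Y y} -> {x | X x}),
    (forall x, g (f x) = x) /\ (forall y, f (g y) = y).

(** Elements of a minimal generating set are pairwise incomparable for the
    preorder [a <= b <-> a ∈ bS]: if [x ∈ x'S] with [x <> x'], then [x] can be
    dropped.  Choosing for each [x ∈ X] some [y ∈ Y] with [x ∈ yS], and back,
    the composite sends [x] to some [x' ∈ X] with [x ∈ x'S], hence to [x]
    itself.  So the two choice maps are mutually inverse. *)
From Stdlib Require Import List Classical ClassicalEpsilon ProofIrrelevance.

Section MinimalGenerating.

Variables (S : monoid) (A : ract S).

Definition in_cyclic (a b : A) : Prop := exists s : S, a = act A b s.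

Lemma in_cyclic_trans (a b c : A) :
  in_cyclic a b -> in_cyclic b c -> in_cyclic a c.
Proof.
  intros [s Hab] [t Hbc]. exists (mmul S t s).
  rewrite actA, <- Hbc. exact Hab.
Qed.

Lemma minimal_generating_antichain (X : A -> Prop) (x x' : A) :
  minimal_generating S A X -> X x -> X x' -> in_cyclic x x' -> x' = x.
Proof.
  intros [hgen hmin] Hx Hx' [s Hs].
  destruct (classic (x' = x)) as [E | N]; [exact E | exfalso].
  apply (hmin (fun y => X y /\ y <> x)).
  - intros y [Hy _]; exact Hy.
  - exists x; split; [exact Hx |]. intros [_ H]; apply H; reflexivity.
  - intros a. destruct (hgen a) as [x0 [s0 [Hx0 Ha]]].
    destruct (classic (x0 = x)) as [-> | N0].
    + exists x', (mmul S s s0). split; [split; assumption |].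
      rewrite actA, <- Hs. exact Ha.
    + exists x0, s0. split; [split; assumption | exact Ha].
Qed.

Definition generator_of (Y : A -> Prop) (hY : generates S A Y) (a : A) :
  {y | Y y /\ in_cyclic a y}.
Proof.
  apply constructive_indefinite_description.
  destruct (hY a) as [y [s [Hy Ha]]].
  exists y. split; [exact Hy | exists s; exact Ha].
Defined.

Definition cover_map (X Y : A -> Prop) (hY : generates S A Y)
  (x : {x | X x}) : {y | Y y} :=
  let (y, Hy) := generator_of Y hY (proj1_sig x) in exist Y y (proj1 Hy).

Lemma cover_map_in_cyclic (X Y : A -> Prop) (hY : generates S A Y)
  (x : {x | X x}) :
  in_cyclic (proj1_sig x) (proj1_sig (cover_map X Y hY x)).
Proof.
  unfold cover_map. destruct (generator_of Y hY (proj1_sig x)) as [y Hy].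
  exact (proj2 Hy).
Qed.

Lemma cover_map_cancel (X Y : A -> Prop)
  (hX : minimal_generating S A X) (hY : generates S A Y) (x : {x | X x}) :
  cover_map Y X (proj1 hX) (cover_map X Y hY x) = x.
Proof.
  apply eq_sig_hprop; [intros; apply proof_irrelevance |].
  apply (minimal_generating_antichain X _ _ hX (proj2_sig x) (proj2_sig _)).
  eapply in_cyclic_trans; apply cover_map_in_cyclic.
Qed.

End MinimalGenerating.

Theorem lemma3p3 (S : monoid)
  (hzero : exists! z : S, is_zero S z)
  (hinv : forall s : S, ~ is_zero S s -> invertible S s)
  (A : ract S) (hfg : finitely_generated S A)
  (X Y : A -> Prop)
  (hX : minimal_generating S A X) (hY : minimal_generating S A Y) :
  same_card X Y.
Proof.
  exists (cover_map S A X Y (proj1 hY)), (cover_map S A Y X (proj1 hX)).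
  split; intros; apply cover_map_cancel.
Qed.
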